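(* Let $A$ be the $N\times N$ extended Cartan matrix of one of the affine extensions $A_4^=$, $D_6^>$, $D_6^=$, $D_6^<$, $E_8^=$ (so $N=5,7,7,7,9$). Let $B=\begin{pmatrix}2&v^T\\ w&A\end{pmatrix}$ be an $(N+1)\times(N+1)$ matrix with $v,w\in\mathbb{Z}^N$ such that $v_i\le 0$ and $w_i\le0$ for all $i$, $v_i=0$ if and only if $w_i=0$, and $\det B=0$ (i.e. $B$ is a Kac–Moody-type affine extension of $A$ by one further node). Then $v=w=0$, i.e. the additional node is disconnected from the diagram.
   Context: The Cartan matrix of a simply-laced Dynkin diagram has diagonal entries $2$, entry $-1$ for joined nodes and $0$ otherwise. The extended Cartan matrices are (indices $0,\dots,n$): $A_4^=$: simply-laced cycle $0-1-2-3-4-0$. $D_6^=$: simply-laced diagram with chain $1-2-3-4-5$, node $6$ joined to $4$, node $0$ joined to $2$. $D_6^<$: the $D_6$ part (chain $1-2-3-4-5$, node $6$ joined to $4$, simply laced) together with node $0$ where $A_{01}=-2$, $A_{10}=-1$ and $A_{0j}=A_{j0}=0$ for $j\ge2$. $D_6^>$: same as $D_6^<$ but with $A_{01}=-1$, $A_{10}=-2$. $E_8^=$: simply-laced diagram with chain $0-1-2-3-4-5-6-7$ and node $8$ joined to node $5$. *)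

From mathcomp Require Import all_boot all_order all_algebra.
Set Implicit Arguments. Unset Strict Implicit. Unset Printing Implicit Defensive.
Import Order.TTheory GRing.Theory Num.Theory.
Local Open Scope ring_scope.

Definition simply_laced (n : nat) (adj : nat -> nat -> bool) : 'M[int]_n :=
  \matrix_(i < n, j < n)
    (if (i : nat) == (j : nat) then 2
     else if adj i j || adj j i then -1 else 0).

(* A_4^= : cycle 0-1-2-3-4-0 *)
Definition adjA4 (i j : nat) : bool := (j == i.+1)%N || ((i == 0) && (j == 4))%N.
(* D_6 part: chain 1-2-3-4-5, node 6 joined to 4 *)
Definition adjD6 (i j : nat) : bool :=
  [&& 1 <= i, i <= 4 & j == i.+1]%N || ((i == 4) && (j == 6))%N.
Definition adjD6eq (i j : nat) : bool := adjD6 i j || ((i == 0) && (j == 2))%N.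
(* E_8^= : chain 0-1-...-7, node 8 joined to 5 *)
Definition adjE8 (i j : nat) : bool :=
  ((i <= 6) && (j == i.+1))%N || ((i == 5) && (j == 8))%N.

Definition cartan_A4eq : 'M[int]_5 := simply_laced 5 adjA4.
Definition cartan_D6eq : 'M[int]_7 := simply_laced 7 adjD6eq.
Definition cartan_D6lt : 'M[int]_7 :=
  \matrix_(i < 7, j < 7)
    (if ((i : nat) == 0)%N && ((j : nat) == 1)%N then -2
     else if ((i : nat) == 1)%N && ((j : nat) == 0)%N then -1
     else simply_laced 7 adjD6 i j).
Definition cartan_D6gt : 'M[int]_7 :=
  \matrix_(i < 7, j < 7)
    (if ((i : nat) == 0)%N && ((j : nat) == 1)%N then -1
     else if ((i : nat) == 1)%N && ((j : nat) == 0)%N then -2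
     else simply_laced 7 adjD6 i j).
Definition cartan_E8eq : 'M[int]_9 := simply_laced 9 adjE8.

Inductive affine_ext := A4eq | D6gt | D6eq | D6lt | E8eq.

Definition ext_dim (t : affine_ext) : nat :=
  match t with A4eq => 5 | D6gt | D6eq | D6lt => 7 | E8eq => 9 end.

Definition ext_cartan (t : affine_ext) : 'M[int]_(ext_dim t) :=
  match t with
  | A4eq => cartan_A4eq | D6gt => cartan_D6gt | D6eq => cartan_D6eq
  | D6lt => cartan_D6lt | E8eq => cartan_E8eq
  end.

Definition ext_matrix (N : nat) (A : 'M[int]_N) (v w : 'cV[int]_N) : 'M[int]_(1 + N) :=
  block_mx (2%:M : 'M[int]_1) v^T w A.

(* Expanding along the first row, det B = 2 det A - v^T (adj A) w.  For the affine
   matrices A the cofactor at node 0 is non-zero (removing node 0 leaves a finite-type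
   diagram), so det A = 0, the kernels of A and A^T are the lines spanned by the
   positive marks d and comarks d', and adj A is a non-zero multiple of d d'^T.
   Hence det B = 0 forces (v . d) (w . d') = 0; since v, w <= 0 and d, d' > 0 one of
   v, w vanishes, and the other one then vanishes because v and w have the same support. *)

From mathcomp Require Import all_boot all_order all_algebra.
From mathcomp Require Import ring zify.
Set Implicit Arguments.
Unset Strict Implicit.
Unset Printing Implicit Defensive.
Import Order.TTheory GRing.Theory Num.Theory.
Local Open Scope ring_scope.

Section CofactorKernel.

Variables (R : idomainType) (n : nat).

Lemma cofactor_diag (A : 'M[R]_n) i0 : \adj A i0 i0 = \det (row' i0 (col' i0 A)).
Proof. by rewrite mxE /cofactor -signr_odd oddD addbb mul1r. Qed.

Lemma det_mulmx_eq0 m (M : 'M[R]_m) (z : 'cV[R]_m) : \det M != 0 -> M *m z = 0 -> z = 0.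
Proof.
move=> detM Mz; apply: (scalemx_inj detM).
by rewrite scaler0 -mul_scalar_mx -mul_adj_mx -mulmxA Mz mulmx0.
Qed.

Lemma det_neq0_of_row_kernel m (M : 'M[R]_m) :
  (forall y : 'rV[R]_m, y *m M = 0 -> y = 0) -> \det M != 0.
Proof. by move=> ker; apply/det0P => -[y + /ker y0]; rewrite y0 eqxx. Qed.

(* [y := d_i0 x - x_i0 d] is in the kernel of [A] and vanishes at [i0], so it is killed
   by the non-singular minor at [i0]. *)
Lemma cofactor_kernel_line (A : 'M[R]_n) i0 (d x : 'cV[R]_n) :
  \adj A i0 i0 != 0 -> A *m d = 0 -> A *m x = 0 -> d i0 0 *: x = x i0 0 *: d.
Proof.
move=> cofA Ad Ax; apply/eqP; rewrite -subr_eq0; apply/eqP.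
set y := _ - _.
have Ay : A *m y = 0 by rewrite mulmxBr -!scalemxAr Ad Ax !scaler0 subrr.
have y_i0 : y i0 0 = 0 by rewrite !mxE mulrC subrr.
have My : row' i0 (col' i0 A) *m row' i0 y = 0.
  apply/colP => i; transitivity ((A *m y) (lift i0 i) 0); last by rewrite Ay !mxE.
  rewrite [RHS]mxE (bigD1_ord i0) //= y_i0 mulr0 add0r mxE.
  by apply: eq_bigr => j _; rewrite !mxE.
have y'0 : row' i0 y = 0 by apply: det_mulmx_eq0 My; rewrite -cofactor_diag.
apply/colP => j; case: (unliftP i0 j) => [j' ->|->]; last by rewrite y_i0 mxE.
by have := congr1 (fun M : 'cV[R]_n.-1 => M j' 0) y'0; rewrite !mxE.
Qed.

Lemma det_eq0_of_null (A : 'M[R]_n) i0 (d : 'cV[R]_n) :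
  d i0 0 != 0 -> A *m d = 0 -> \det A = 0.
Proof.
move=> d0 Ad; have := congr1 (fun M : 'cV[R]_n => (\adj A *m M) i0 0) Ad.
rewrite /= mulmxA mul_adj_mx mul_scalar_mx mulmx0 !mxE => /eqP.
by rewrite mulf_eq0 (negPf d0) orbF => /eqP.
Qed.

(* Columns of [\adj A] lie in the kernel of [A] and rows in that of [A^T]; both kernels are lines. *)
Lemma adj_rank_one (A : 'M[R]_n) i0 (d d' : 'cV[R]_n) :
  \adj A i0 i0 != 0 -> d i0 0 != 0 -> A *m d = 0 -> A^T *m d' = 0 ->
  forall k i, d i0 0 * d' i0 0 * \adj A k i = \adj A i0 i0 * d k 0 * d' i 0.
Proof.
move=> cofA d0 Ad A'd' k i.
have detA := det_eq0_of_null d0 Ad.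
have adj_col j : A *m col j (\adj A) = 0.
  by rewrite colE mulmxA mul_mx_adj detA mul_scalar_mx scale0r.
have adj_row j : A^T *m (row j (\adj A))^T = 0.
  by rewrite -trmx_mul rowE -mulmxA mul_adj_mx detA mul_mx_scalar scale0r trmx0.
have cofA' : \adj A^T i0 i0 != 0 by rewrite -trmx_adj mxE.
have col_line l j : d i0 0 * \adj A l j = \adj A i0 j * d l 0.
  have := congr1 (fun M : 'cV[R]_n => M l 0) (cofactor_kernel_line cofA Ad (adj_col j)).
  by rewrite !mxE.
have row_line l j : d' i0 0 * \adj A l j = \adj A l i0 * d' j 0.
  have := congr1 (fun M : 'cV[R]_n => M j 0) (cofactor_kernel_line cofA' A'd' (adj_row l)).
  by rewrite !mxE.
by rewrite -mulrA row_line mulrA col_line.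
Qed.

End CofactorKernel.

Lemma nonpos_sum_pmul_eq0 (R : numDomainType) n (a c : 'I_n -> R) :
  (forall i, a i <= 0) -> (forall i, 0 < c i) -> \sum_i a i * c i = 0 ->
  forall i, a i = 0.
Proof.
move=> a_le0 c_gt0 sum0 i.
have /eqP : - (a i * c i) = 0.
  apply: (@psumr_eq0P _ _ xpredT (fun j => - (a j * c j))) => //.
    by move=> j _; rewrite oppr_ge0 pmulr_lle0.
  by rewrite sumrN sum0 oppr0.
by rewrite oppr_eq0 mulf_eq0 (gt_eqF (c_gt0 i)) orbF => /eqP.
Qed.

Section ExtMatrix.

Variables (n : nat) (A : 'M[int]_n.+1) (v w : 'cV[int]_n.+1).

Lemma ext_matrixE00 : ext_matrix A v w ord0 ord0 = 2.
Proof.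
have -> : ord0 = lshift n.+1 (ord0 : 'I_1) by apply/val_inj.
by rewrite /ext_matrix block_mxEul mxE.
Qed.

Lemma ext_matrixE0l j : ext_matrix A v w ord0 (lift ord0 j) = v j 0.
Proof.
have -> : lift ord0 j = rshift 1 j by apply/val_inj.
have -> : ord0 = lshift n.+1 (ord0 : 'I_1) by apply/val_inj.
by rewrite /ext_matrix block_mxEur mxE.
Qed.

Lemma ext_matrixEl0 i : ext_matrix A v w (lift ord0 i) ord0 = w i 0.
Proof.
have -> : lift ord0 i = rshift 1 i by apply/val_inj.
have -> : ord0 = lshift n.+1 (ord0 : 'I_1) by apply/val_inj.
by rewrite /ext_matrix block_mxEdl.
Qed.

Lemma ext_matrixEll i j : ext_matrix A v w (lift ord0 i) (lift ord0 j) = A i j.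
Proof.
have -> : lift ord0 i = rshift 1 i by apply/val_inj.
have -> : lift ord0 j = rshift 1 j by apply/val_inj.
by rewrite /ext_matrix block_mxEdr.
Qed.

Lemma ext_matrix_cofactor00 : cofactor (ext_matrix A v w) ord0 ord0 = \det A.
Proof.
rewrite /cofactor expr0 mul1r; congr (\det _); apply/matrixP => a b.
by rewrite 2!mxE ext_matrixEll.
Qed.

Lemma ext_matrix_cofactor0l k :
  cofactor (ext_matrix A v w) ord0 (lift ord0 k) = - \sum_i w i 0 * \adj A k i.
Proof.
rewrite /cofactor; set M := row' _ _.
rewrite (expand_det_col M ord0) mulr_sumr -sumrN; apply: eq_bigr => i _.
have -> : M i ord0 = w i 0.
  rewrite /M 2!mxE.
  have -> : lift (lift ord0 k) (ord0 : 'I_n.+1) = ord0 by apply/val_inj.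
  by rewrite ext_matrixEl0.
rewrite [cofactor M i ord0]/cofactor.
have -> : row' i (col' ord0 M) = row' i (col' k A).
  apply/matrixP => a b; rewrite /M 4!mxE.
  have -> : lift (lift ord0 k) (lift ord0 b) = lift ord0 (lift k b).
    by apply/val_inj; rewrite /= /bump /= !add1n ltnS addnS.
  by rewrite ext_matrixEll !mxE.
rewrite mxE /cofactor /= add0n addn0 exprS exprD; ring.
Qed.

Lemma det_ext_matrix :
  \det (ext_matrix A v w) = 2 * \det A - \sum_k \sum_i v k 0 * w i 0 * \adj A k i.
Proof.
rewrite (expand_det_row _ ord0) big_ord_recl ext_matrixE00 ext_matrix_cofactor00.
rewrite -sumrN; congr (_ + _); apply: eq_bigr => k _.
rewrite ext_matrixE0l ext_matrix_cofactor0l mulrN mulr_sumr; congr (- _).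
by apply: eq_bigr => i _; rewrite mulrA.
Qed.

Lemma det_ext_matrix_null i0 (d d' : 'cV[int]_n.+1) :
  \adj A i0 i0 != 0 -> d i0 0 != 0 -> A *m d = 0 -> A^T *m d' = 0 ->
  d i0 0 * d' i0 0 * \det (ext_matrix A v w) =
  - (\adj A i0 i0 * (\sum_k v k 0 * d k 0) * (\sum_i w i 0 * d' i 0)).
Proof.
move=> cofA d0 Ad A'd'.
rewrite det_ext_matrix (det_eq0_of_null d0 Ad) mulr0 sub0r mulrN; congr (- _).
rewrite -mulrA mulr_suml !mulr_sumr; apply: eq_bigr => k _.
rewrite !mulr_sumr; apply: eq_bigr => i _.
transitivity (v k 0 * w i 0 * (d i0 0 * d' i0 0 * \adj A k i)); first ring.
by rewrite (adj_rank_one cofA d0 Ad A'd'); ring.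
Qed.

Lemma ext_matrix_det_eq0 i0 (d d' : 'cV[int]_n.+1) :
  \adj A i0 i0 != 0 -> (forall i, 0 < d i 0) -> (forall i, 0 < d' i 0) ->
  A *m d = 0 -> A^T *m d' = 0 ->
  (forall i, v i 0 <= 0) -> (forall i, w i 0 <= 0) ->
  (forall i, (v i 0 == 0) = (w i 0 == 0)) ->
  \det (ext_matrix A v w) = 0 ->
  v = 0 /\ w = 0.
Proof.
move=> cofA d_gt0 d'_gt0 Ad A'd' v_le0 w_le0 vw0 detB.
have := det_ext_matrix_null cofA (lt0r_neq0 (d_gt0 i0)) Ad A'd'.
rewrite detB mulr0 => /esym /eqP; rewrite oppr_eq0 !mulf_eq0 (negPf cofA) /=.
have v0_vw0 : (forall i, v i 0 = 0) -> v = 0 /\ w = 0.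
  move=> v0; split; apply/colP => i; rewrite mxE //.
  by apply/eqP; rewrite -vw0 v0.
case/orP => /eqP sum0; apply: v0_vw0 => i.
  exact: nonpos_sum_pmul_eq0 v_le0 d_gt0 sum0 i.
by apply/eqP; rewrite vw0; apply/eqP; apply: nonpos_sum_pmul_eq0 w_le0 d'_gt0 sum0 i.
Qed.

End ExtMatrix.

Lemma simply_laced_tr n adj : (simply_laced n adj)^T = simply_laced n adj.
Proof. by apply/matrixP => i j; rewrite !mxE eq_sym orbC. Qed.

Lemma cartan_D6gt_tr : cartan_D6gt = cartan_D6lt^T.
Proof.
apply/matrixP => i j; rewrite !mxE [(j : nat) == i]eq_sym [adjD6 j i || _]orbC.
by case: i j => [[|[|i]] ?] [[|[|j]] ?].
Qed.

Lemma mulmx_inordE (R : pzSemiRingType) m n p (A : 'M[R]_(m, n.+1)) (B : 'M_(n.+1, p)) i k :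
  (A *m B) i k = \sum_(0 <= j < n.+1) A i (inord j) * B (inord j) k.
Proof. by rewrite mxE big_mkord; apply: eq_bigr => j _; rewrite inord_val. Qed.

Lemma row_equations (R : pzSemiRingType) m n (y : 'rV[R]_m) (M : 'M_(m, n.+1)) :
  y *m M = 0 -> forall k, (k < n.+1)%N -> (y *m M) 0 (inord k) = 0.
Proof. by move=> -> k _; rewrite mxE. Qed.

Lemma forall_inord n (P : 'I_n.+1 -> Prop) :
  (forall k, (k < n.+1)%N -> P (inord k)) -> forall i, P i.
Proof. by move=> h i; rewrite -(inord_val i); apply: h. Qed.

Lemma all_iotaP n (p : pred nat) : all p (iota 0 n) -> forall k, (k < n)%N -> p k.
Proof. by move=> /allP h k hk; apply: h; rewrite mem_iota. Qed.

(* Reduce each entry of a concrete matrix to a closed boolean and evaluate it. *)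
Ltac decide_entries :=
  let k := fresh "k" in let hk := fresh "hk" in
  apply: forall_inord => k hk; rewrite ?mulmx_inordE ?unlock /= !mxE /= !inordK //;
  try apply/eqP; move: k hk; apply: all_iotaP; by [].

Ltac push_row_equations h k :=
  first [ let e := fresh "e" in
          have e := h k isT;
          rewrite mulmx_inordE unlock /= !mxE /= !inordK //= in e;
          move: e; push_row_equations h (S k)
        | idtac ].

Ltac solve_row_kernel :=
  let y := fresh "y" in let h := fresh "h" in
  let k := fresh "k" in let hk := fresh "hk" in
  move=> y /row_equations h; push_row_equations h 0%N; move=> *;
  apply/rowP; apply: forall_inord => k hk; rewrite mxE /=;
  do 9 (case: k hk => [|k] hk; first lia); lia.

Definition marks_A4eq : 'cV[int]_5 := \col_i (nth 0 [:: 1; 1; 1; 1; 1] i).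
Definition marks_D6eq : 'cV[int]_7 := \col_i (nth 0 [:: 1; 1; 2; 2; 2; 1; 1] i).
Definition marks_D6lt : 'cV[int]_7 := \col_i (nth 0 [:: 2; 2; 2; 2; 2; 1; 1] i).
Definition comarks_D6lt : 'cV[int]_7 := \col_i (nth 0 [:: 1; 2; 2; 2; 2; 1; 1] i).
Definition marks_E8eq : 'cV[int]_9 := \col_i (nth 0 [:: 1; 2; 3; 4; 5; 6; 4; 2; 3] i).

Lemma marks_A4eq_gt0 i : 0 < marks_A4eq i 0. Proof. move: i; decide_entries. Qed.
Lemma marks_D6eq_gt0 i : 0 < marks_D6eq i 0. Proof. move: i; decide_entries. Qed.
Lemma marks_D6lt_gt0 i : 0 < marks_D6lt i 0. Proof. move: i; decide_entries. Qed.
Lemma comarks_D6lt_gt0 i : 0 < comarks_D6lt i 0. Proof. move: i; decide_entries. Qed.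
Lemma marks_E8eq_gt0 i : 0 < marks_E8eq i 0. Proof. move: i; decide_entries. Qed.

Lemma cartan_A4eq_marks : cartan_A4eq *m marks_A4eq = 0.
Proof. apply/colP; decide_entries. Qed.
Lemma cartan_D6eq_marks : cartan_D6eq *m marks_D6eq = 0.
Proof. apply/colP; decide_entries. Qed.
Lemma cartan_D6lt_marks : cartan_D6lt *m marks_D6lt = 0.
Proof. apply/colP; decide_entries. Qed.
Lemma cartan_D6lt_comarks : cartan_D6lt^T *m comarks_D6lt = 0.
Proof. apply/colP; decide_entries. Qed.
Lemma cartan_E8eq_marks : cartan_E8eq *m marks_E8eq = 0.
Proof. apply/colP; decide_entries. Qed.

Lemma cartan_A4eq_comarks : cartan_A4eq^T *m marks_A4eq = 0.
Proof. by rewrite simply_laced_tr cartan_A4eq_marks. Qed.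
Lemma cartan_D6eq_comarks : cartan_D6eq^T *m marks_D6eq = 0.
Proof. by rewrite simply_laced_tr cartan_D6eq_marks. Qed.
Lemma cartan_E8eq_comarks : cartan_E8eq^T *m marks_E8eq = 0.
Proof. by rewrite simply_laced_tr cartan_E8eq_marks. Qed.
Lemma cartan_D6gt_marks : cartan_D6gt *m comarks_D6lt = 0.
Proof. by rewrite cartan_D6gt_tr cartan_D6lt_comarks. Qed.
Lemma cartan_D6gt_comarks : cartan_D6gt^T *m marks_D6lt = 0.
Proof. by rewrite cartan_D6gt_tr trmxK cartan_D6lt_marks. Qed.

(* Removing node 0 leaves the finite-type diagrams A_4, D_6 and E_8. *)
Lemma cartan_A4eq_cofactor : \adj cartan_A4eq 0 0 != 0.
Proof. rewrite cofactor_diag; apply: (@det_neq0_of_row_kernel _ 4); solve_row_kernel. Qed.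
Lemma cartan_D6eq_cofactor : \adj cartan_D6eq 0 0 != 0.
Proof. rewrite cofactor_diag; apply: (@det_neq0_of_row_kernel _ 6); solve_row_kernel. Qed.
Lemma cartan_D6lt_cofactor : \adj cartan_D6lt 0 0 != 0.
Proof. rewrite cofactor_diag; apply: (@det_neq0_of_row_kernel _ 6); solve_row_kernel. Qed.
Lemma cartan_E8eq_cofactor : \adj cartan_E8eq 0 0 != 0.
Proof. rewrite cofactor_diag; apply: (@det_neq0_of_row_kernel _ 8); solve_row_kernel. Qed.
Lemma cartan_D6gt_cofactor : \adj cartan_D6gt 0 0 != 0.
Proof. by rewrite cartan_D6gt_tr -trmx_adj mxE cartan_D6lt_cofactor. Qed.

Theorem mainTheorem3 (t : affine_ext) (v w : 'cV[int]_(ext_dim t)) :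
  (forall i, v i 0 <= 0) ->
  (forall i, w i 0 <= 0) ->
  (forall i, (v i 0 == 0) = (w i 0 == 0)) ->
  \det (ext_matrix (ext_cartan t) v w) = 0 ->
  v = 0 /\ w = 0.
Proof.
case: t v w => v w.
- exact: ext_matrix_det_eq0 cartan_A4eq_cofactor marks_A4eq_gt0 marks_A4eq_gt0
    cartan_A4eq_marks cartan_A4eq_comarks.
- exact: ext_matrix_det_eq0 cartan_D6gt_cofactor comarks_D6lt_gt0 marks_D6lt_gt0
    cartan_D6gt_marks cartan_D6gt_comarks.
- exact: ext_matrix_det_eq0 cartan_D6eq_cofactor marks_D6eq_gt0 marks_D6eq_gt0
    cartan_D6eq_marks cartan_D6eq_comarks.
- exact: ext_matrix_det_eq0 cartan_D6lt_cofactor marks_D6lt_gt0 comarks_D6lt_gt0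
    cartan_D6lt_marks cartan_D6lt_comarks.
- exact: ext_matrix_det_eq0 cartan_E8eq_cofactor marks_E8eq_gt0 marks_E8eq_gt0
    cartan_E8eq_marks cartan_E8eq_comarks.
Qed.
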